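(* The $\Sigma_1$-theory $\mathcal{T}_\varsigma$ is stably finite, and thus has the finite model property, with respect to $\{\sigma\}$.
   Context: $\varsigma:\mathbb{N}\to\mathbb{N}$ is the Busy Beaver function: $\varsigma(n)$ is the maximum number of $1$'s that a halting Turing machine with at most $n$ states can leave on its tape, starting from an all-$0$ tape. $\Sigma_1$ is the empty signature (only equality, interpreted as identity) with one sort $\sigma$. Let $\psi_{\ge n}=\exists x_1\dots x_n.\bigwedge_{1\le i<j\le n}\neg(x_i=x_j)$, $\psi_{\le n}=\exists x_1\dots x_n\forall y.\bigvee_{i=1}^n y=x_i$, $\psi_{=n}=\psi_{\ge n}\wedge\psi_{\le n}$. $\mathcal{T}_\varsigma$ is the $\Sigma_1$-theory (class of all $\Sigma_1$-interpretations satisfying the axioms) axiomatized by $\{\psi_{\ge\varsigma(k+2)}\vee\bigvee_{i=2}^{k+2}\psi_{=\varsigma(i)}:k\in\mathbb{N}\}$. A theory $\mathcal{T}$ is stably finite w.r.t. $\{\sigma\}$ if for every quantifier-free $\phi$ and $\mathcal{T}$-interpretation $\mathcal{A}$ satisfying $\phi$ there is a $\mathcal{T}$-interpretation $\mathcal{B}$ satisfying $\phi$ with $|\sigma^{\mathcal{B}}|$ finite and $|\sigma^{\mathcal{B}}|\le|\sigma^{\mathcal{A}}|$. It has the finite model property w.r.t. $\{\sigma\}$ if every quantifier-free formula satisfied by some $\mathcal{T}$-interpretation is satisfied by some $\mathcal{T}$-interpretation with finite domain. *)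

From Stdlib Require Import ZArith List Arith ClassicalEpsilon.
Import ListNotations.

(* A 2-symbol (0 = false, 1 = true) Turing machine with states 0..n-1,
   start state 0, on a bi-infinite tape.  [delta q b = (w, r, q')]:
   write w, move right if r (left otherwise), go to state q'
   (None = halt). *)
Record TM := { tm_delta : nat -> bool -> bool * bool * option nat }.

Definition tm_states_le (n : nat) (M : TM) : Prop :=
  0 < n /\
  forall q b, q < n ->
    match tm_delta M q b with
    | (_, _, Some q') => q' < n
    | (_, _, None) => True
    end.

Definition config := (option nat * (Z -> bool) * Z)%type.

Definition tm_init : config := (Some 0, fun _ => false, 0%Z).

Definition tm_step (M : TM) (c : config) : config :=
  match c with
  | (None, tape, h) => (None, tape, h)
  | (Some q, tape, h) =>
      match tm_delta M q (tape h) with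
      | (w, r, q') =>
          (q', (fun z => if Z.eqb z h then w else tape z),
           if r then (h + 1)%Z else (h - 1)%Z)
      end
  end.

Fixpoint tm_run (M : TM) (t : nat) : config :=
  match t with
  | 0 => tm_init
  | S t' => tm_step M (tm_run M t')
  end.

(* Number of 1's on the tape in the window [-t, t]; after t steps
   the tape is blank outside [-(t-1), t-1]. *)
Definition ones_in_window (tape : Z -> bool) (t : nat) : nat :=
  length (filter (fun i => tape (Z.of_nat i - Z.of_nat t)%Z) (seq 0 (2 * t + 1))).

Definition tm_halts_with (M : TM) (c : nat) : Prop :=
  exists t tape h, tm_run M t = (None, tape, h) /\ c = ones_in_window tape t.

Definition BB_spec (n m : nat) : Prop :=
  (m = 0 \/ exists M, tm_states_le n M /\ tm_halts_with M m) /\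
  (forall M c, tm_states_le n M -> tm_halts_with M c -> c <= m).

Definition busy_beaver (n : nat) : nat :=
  epsilon (inhabits 0) (BB_spec n).

(* A Sigma_1-interpretation: a domain for sort sigma and an assignment
   of the variables x_0, x_1, ... (hence the domain is nonempty). *)
Record interp := { dom : Type; assign : nat -> dom }.

Inductive qf : Type :=
| QTrue | QFalse
| QEq (i j : nat)
| QNot (p : qf)
| QAnd (p q : qf)
| QOr (p q : qf)
| QImp (p q : qf).

Fixpoint qf_sat (A : interp) (p : qf) : Prop :=
  match p with
  | QTrue => True
  | QFalse => False
  | QEq i j => assign A i = assign A j
  | QNot p => ~ qf_sat A p
  | QAnd p q => qf_sat A p /\ qf_sat A q
  | QOr p q => qf_sat A p \/ qf_sat A q
  | QImp p q => qf_sat A p -> qf_sat A q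
  end.

Definition psi_ge (n : nat) (D : Type) : Prop :=
  exists x : nat -> D, forall i j, i < n -> j < n -> i <> j -> x i <> x j.
Definition psi_le (n : nat) (D : Type) : Prop :=
  exists x : nat -> D, forall y : D, exists i, i < n /\ y = x i.
Definition psi_eq (n : nat) (D : Type) : Prop := psi_ge n D /\ psi_le n D.

(* A theory = class of interpretations, given by a condition on the
   domain (all axioms are sentences). *)
Definition T_varsigma (D : Type) : Prop :=
  forall k : nat,
    psi_ge (busy_beaver (k + 2)) D \/
    exists i, 2 <= i <= k + 2 /\ psi_eq (busy_beaver i) D.

Definition finite_type (D : Type) : Prop :=
  exists l : list D, forall x : D, In x l.

Definition card_le (D1 D2 : Type) : Prop :=
  exists f : D1 -> D2, forall x y, f x = f y -> x = y.

Definition stably_finite (T : Type -> Prop) : Prop :=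
  forall (phi : qf) (A : interp), T (dom A) -> qf_sat A phi ->
    exists B : interp, T (dom B) /\ qf_sat B phi /\
      finite_type (dom B) /\ card_le (dom B) (dom A).

Definition finite_model_property (T : Type -> Prop) : Prop :=
  forall (phi : qf) (A : interp), T (dom A) -> qf_sat A phi ->
    exists B : interp, T (dom B) /\ qf_sat B phi /\ finite_type (dom B).

From Stdlib Require Import Compare_dec Lia List Classical ClassicalEpsilon Peano_dec Wf_nat.
Import ListNotations.

(* A quantifier-free formula only sees the equality pattern of its finitely
   many variables, so it keeps its truth value in any interpretation realising
   the same pattern.  A finite model is its own finite witness.  For an
   infinite model with m variables, choose a size s >= m such that a domain
   of exactly s elements satisfies every axiom: the least value ς(i) (i >= 2)
   that is at least m, or m itself if no such value exists.  Identify each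
   variable with the least index of a variable having the same value; this
   realises the pattern of the first s variables in {0, ..., s-1}, and an
   s-element domain injects into the infinite one.  Nothing about ς beyond
   being a function is used. *)

Fixpoint qf_var_bound (p : qf) : nat :=
  match p with
  | QTrue | QFalse => 0
  | QEq i j => max (S i) (S j)
  | QNot p => qf_var_bound p
  | QAnd p q | QOr p q | QImp p q => max (qf_var_bound p) (qf_var_bound q)
  end.

Definition same_eq_pattern (m : nat) (A B : interp) : Prop :=
  forall i j, i < m -> j < m -> (assign A i = assign A j <-> assign B i = assign B j).

Lemma qf_sat_same_eq_pattern (m : nat) (A B : interp) (p : qf) :
  same_eq_pattern m A B -> qf_var_bound p <= m -> (qf_sat A p <-> qf_sat B p).
Proof.
  intros Hpat; induction p; simpl; intros Hbound.
  - tauto.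
  - tauto.
  - apply Hpat; lia.
  - rewrite IHp by lia; tauto.
  - rewrite IHp1, IHp2 by lia; tauto.
  - rewrite IHp1, IHp2 by lia; tauto.
  - rewrite IHp1, IHp2 by lia; tauto.
Qed.

Lemma stably_finite_finite_model_property (T : Type -> Prop) :
  stably_finite T -> finite_model_property T.
Proof.
  intros Hstable phi A HT Hsat.
  destruct (Hstable phi A HT Hsat) as (B & HTB & HsatB & Hfin & _).
  now exists B.
Qed.

Lemma least_witness (P : nat -> Prop) :
  (exists n, P n) -> exists n, P n /\ forall n', P n' -> n <= n'.
Proof.
  intros Hex.
  destruct (dec_inh_nat_subset_has_unique_least_element P (fun n => classic (P n)) Hex)
    as (n & Hn & _).
  now exists n.
Qed.

Lemma psi_ge_le (n n' : nat) (D : Type) : n' <= n -> psi_ge n D -> psi_ge n' D.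
Proof.
  intros Hle [x Hx]; exists x; intros i j Hi Hj; apply Hx; lia.
Qed.

Lemma infinite_NoDup_list (D : Type) :
  ~ finite_type D -> forall n, exists l : list D, length l = n /\ NoDup l.
Proof.
  intros Hinf n; induction n as [|n (l & Hlen & Hnodup)].
  - exists []; split; [reflexivity | constructor].
  - destruct (not_all_ex_not _ _ (fun Hall => Hinf (ex_intro _ l Hall))) as [x Hx].
    exists (x :: l); split; [simpl; congruence | now constructor].
Qed.

Definition fin (s : nat) : Type := {k : nat | k < s}.

Lemma fin_eq (s : nat) (x y : fin s) : proj1_sig x = proj1_sig y -> x = y.
Proof.
  destruct x as [k Hk], y as [k' Hk']; simpl; intros <-.
  now rewrite (le_unique _ _ Hk Hk').
Qed.

Lemma card_le_fin_infinite (s : nat) (D : Type) : ~ finite_type D -> card_le (fin s) D.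
Proof.
  intros Hinf.
  destruct (infinite_NoDup_list D Hinf s) as (l & Hlen & Hnodup).
  destruct (not_all_ex_not _ _ (fun Hall => Hinf (ex_intro _ [] Hall))) as [d _].
  exists (fun x => nth (proj1_sig x) l d); intros x y Hxy; apply fin_eq.
  apply NoDup_nth in Hxy; trivial; rewrite Hlen; apply proj2_sig.
Qed.

Section FinOfPositiveSize.

Variable s : nat.
Hypothesis s_pos : 0 < s.

(* Indices out of range are sent to 0. *)
Definition fin_of_nat (k : nat) : fin s :=
  match lt_dec k s with
  | left Hk => exist _ k Hk
  | right _ => exist _ 0 s_pos
  end.

Lemma fin_of_nat_val (k : nat) : k < s -> proj1_sig (fin_of_nat k) = k.
Proof. intros Hk; unfold fin_of_nat; destruct lt_dec; simpl; lia. Qed.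

Lemma fin_of_natK (x : fin s) : fin_of_nat (proj1_sig x) = x.
Proof. apply fin_eq, fin_of_nat_val, proj2_sig. Qed.

Lemma fin_finite : finite_type (fin s).
Proof.
  exists (map fin_of_nat (seq 0 s)); intros x.
  rewrite <- (fin_of_natK x); apply in_map, in_seq.
  pose proof (proj2_sig x); simpl in *; lia.
Qed.

Lemma psi_eq_fin : psi_eq s (fin s).
Proof.
  split; exists fin_of_nat.
  - intros i j Hi Hj Hij Heq; apply Hij.
    now rewrite <- (fin_of_nat_val i), <- (fin_of_nat_val j), Heq.
  - intros x; exists (proj1_sig x); split; [apply proj2_sig | now rewrite fin_of_natK].
Qed.

End FinOfPositiveSize.

Section FirstIndex.

Context {D : Type} (a : nat -> D).

Definition first_index (x : D) : nat :=
  epsilon (inhabits 0) (fun k => a k = x /\ forall k', a k' = x -> k <= k').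

Lemma first_index_spec (j : nat) :
  a (first_index (a j)) = a j /\ forall k', a k' = a j -> first_index (a j) <= k'.
Proof. exact (epsilon_spec _ _ (least_witness _ (ex_intro _ j eq_refl))). Qed.

Lemma first_index_le (j : nat) : first_index (a j) <= j.
Proof. now apply first_index_spec. Qed.

Lemma first_index_inj (i j : nat) : first_index (a i) = first_index (a j) -> a i = a j.
Proof.
  intros Heq.
  now rewrite <- (proj1 (first_index_spec i)), <- (proj1 (first_index_spec j)), Heq.
Qed.

End FirstIndex.

Definition compress_interp (A : interp) (s : nat) (s_pos : 0 < s) : interp :=
  {| dom := fin s;
     assign := fun j => fin_of_nat s s_pos (first_index (assign A) (assign A j)) |}.

Lemma compress_interp_same_eq_pattern (A : interp) (s : nat) (s_pos : 0 < s) :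
  same_eq_pattern s A (compress_interp A s s_pos).
Proof.
  intros i j Hi Hj; simpl; split.
  - now intros ->.
  - intros Heq; apply (first_index_inj (assign A)).
    pose proof (first_index_le (assign A) i); pose proof (first_index_le (assign A) j).
    now rewrite <- (fin_of_nat_val s s_pos (first_index _ (assign A i))),
      <- (fin_of_nat_val s s_pos (first_index _ (assign A j))), Heq by lia.
Qed.

Definition spectrum_theory (g : nat -> nat) (D : Type) : Prop :=
  forall k : nat,
    psi_ge (g (k + 2)) D \/ exists i, 2 <= i <= k + 2 /\ psi_eq (g i) D.

Definition spectrum_size (g : nat -> nat) (s : nat) : Prop :=
  forall k : nat, g (k + 2) <= s \/ exists i, 2 <= i <= k + 2 /\ g i = s.

Lemma spectrum_theory_fin (g : nat -> nat) (s : nat) :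
  0 < s -> spectrum_size g s -> spectrum_theory g (fin s).
Proof.
  intros s_pos Hsize k.
  destruct (Hsize k) as [Hle | (i & Hi & <-)].
  - left; exact (psi_ge_le _ _ _ Hle (proj1 (psi_eq_fin _ s_pos))).
  - right; exists i; split; [exact Hi | now apply psi_eq_fin].
Qed.

Lemma spectrum_size_above (g : nat -> nat) (m : nat) :
  exists s, m <= s /\ spectrum_size g s.
Proof.
  destruct (classic (exists i, 2 <= i /\ m <= g i)) as [Hex | Hnone].
  - destruct (least_witness _ Hex) as (i0 & (Hi0 & Hm) & Hleast).
    exists (g i0); split; [exact Hm |]; intros k.
    destruct (le_lt_dec i0 (k + 2)) as [Hle | Hlt].
    + right; exists i0; split; [lia | reflexivity].
    + left.
      assert (~ (2 <= k + 2 /\ m <= g (k + 2))) by (intros Hk; specialize (Hleast _ Hk); lia).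
      lia.
  - exists m; split; [lia |]; intros k; left.
    assert (~ (2 <= k + 2 /\ m <= g (k + 2))) by (intros Hk; apply Hnone; eauto).
    lia.
Qed.

Lemma spectrum_theory_stably_finite (g : nat -> nat) : stably_finite (spectrum_theory g).
Proof.
  intros phi A HT Hsat.
  destruct (classic (finite_type (dom A))) as [Hfin | Hinf].
  - exists A; repeat split; trivial.
    now exists (fun x => x).
  - destruct (spectrum_size_above g (S (qf_var_bound phi))) as (s & Hs & Hsize).
    assert (s_pos : 0 < s) by lia.
    exists (compress_interp A s s_pos); repeat split.
    + now apply spectrum_theory_fin.
    + apply (qf_sat_same_eq_pattern s A); [apply compress_interp_same_eq_pattern | lia | exact Hsat].
    + now apply fin_finite.
    + now apply card_le_fin_infinite.
Qed.

Theorem lemma52 :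
  stably_finite T_varsigma /\ finite_model_property T_varsigma.
Proof.
  split; [| apply stably_finite_finite_model_property];
    exact (spectrum_theory_stably_finite busy_beaver).
Qed.
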